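(* Let $L$ be a simple finite-dimensional Lie algebra over a field $K$ of characteristic different from $2$ and $3$. Then $C(L)=0$, i.e. every skew-symmetric bilinear form $\varphi:L\times L\to K$ satisfying $\varphi([x,y],z)=\varphi([z,x],y)$ for all $x,y,z\in L$ is zero. *)

(* Finite-dimensional Lie algebras over a field K are modelled
   as a finite-dimensional K-vector space V (a vectType K) with a bracket. *)
From HB Require Import structures.
From mathcomp Require Import all_boot all_order all_algebra.
Set Implicit Arguments. Unset Strict Implicit. Unset Printing Implicit Defensive.
Import GRing.Theory.
Local Open Scope ring_scope.

Definition is_lie_bracket (K : fieldType) (V : vectType K) (br : V -> V -> V) : Prop :=
  [/\ (forall (a : K) (x y z : V), br (a *: x + y) z = a *: br x z + br y z),
      (forall (a : K) (x y z : V), br x (a *: y + z) = a *: br x y + br x z),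
      (forall x : V, br x x = 0) &
      (forall x y z : V, br x (br y z) + br y (br z x) + br z (br x y) = 0)].

Definition lie_ideal (K : fieldType) (V : vectType K) (br : V -> V -> V)
    (I : {vspace V}) : Prop :=
  forall x y : V, y \in I -> br x y \in I.

Definition lie_simple (K : fieldType) (V : vectType K) (br : V -> V -> V) : Prop :=
  (exists x y : V, br x y != 0) /\
  (forall I : {vspace V}, lie_ideal br I -> I = 0%VS \/ I = fullv).

Definition bilinear_form (K : fieldType) (V : vectType K) (phi : V -> V -> K) : Prop :=
  (forall (a : K) (x y z : V), phi (a *: x + y) z = a * phi x z + phi y z) /\
  (forall (a : K) (x y z : V), phi x (a *: y + z) = a * phi x y + phi x z).

Definition skew_symmetric (K : fieldType) (V : vectType K) (phi : V -> V -> K) : Prop :=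
  forall x y : V, phi x y = - phi y x.

From HB Require Import structures.
From mathcomp Require Import all_boot all_order all_algebra.
From mathcomp Require Import ring.
Import GRing.Theory.
Set Implicit Arguments. Unset Strict Implicit. Unset Printing Implicit Defensive.
Local Open Scope ring_scope.

(* For an invariant skew form phi, F x y z w := phi [x, y] [z, w] is skew in
   each pair, skew under swapping the pairs, and satisfies the first Bianchi
   identity by the Jacobi identity; adding four instances of the Bianchi
   identity gives 4 F = 0.  Hence phi vanishes on [L, L] x [L, L], and
   [L, L] = L because it is a nonzero ideal of the simple algebra L. *)

Lemma skew_pair_bianchi_eq0 (K : fieldType) (T : Type) (F : T -> T -> T -> T -> K) :
  2%:R != 0 :> K ->
  (forall x y z w, F y x z w = - F x y z w) ->
  (forall x y z w, F x y w z = - F x y z w) ->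
  (forall x y z w, F z w x y = - F x y z w) ->
  (forall x y z w, F x y z w + F y z x w + F z x y w = 0) ->
  forall x y z w, F x y z w = 0.
Proof.
move=> two_neq0 Fl Fr Fp B z x y w.
have Fwy : F w y z x = F z x y w by rewrite (Fp z x w y) (Fr z x y w) opprK.
have Fxz : F x z w y = F z x y w by rewrite (Fl z x w y) (Fr z x y w) opprK.
have Fyw : F y w x z = F z x y w by rewrite (Fl w y x z) (Fr w y z x) opprK.
have B1 := B x y z w.
have B2 := B y z w x; rewrite (Fr y z x w) (Fr z w x y) Fwy in B2.
have B3 := B z w x y; rewrite (Fr w x y z) Fxz in B3.
have B4 := B w x y z; rewrite (Fr x y z w) Fyw in B4.
have : F z x y w *+ 4 =
    (F x y z w + F y z x w + F z x y w) + (- F y z x w + - F z w x y + F z x y w)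
  + (F z w x y + - F w x y z + F z x y w) + (F w x y z + - F x y z w + F z x y w).
  by ring.
rewrite B1 B2 B3 B4 !addr0 -mulr_natl (natrM K 2 2) => /eqP.
by rewrite !mulf_eq0 (negbTE two_neq0) => /eqP.
Qed.

Lemma biscalar_span_eq0 (K : fieldType) (V : vectType K) (phi : {biscalar V})
    (X Y : seq V) :
  {in X & Y, forall x y, phi x y = 0} ->
  {in <<X>>%VS & <<Y>>%VS, forall x y, phi x y = 0}.
Proof.
move=> phi0 x y; rewrite -[X]/(tval (in_tuple X)) -[Y]/(tval (in_tuple Y)).
move=> /coord_span -> /coord_span ->.
rewrite linear_sumlz big1 // => i _; rewrite linearZl_LR linear_sumr big1 ?mulr0 //.
by move=> j _; rewrite linearZr_LR phi0 ?mulr0 // mem_nth.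
Qed.

Lemma lie_bracket_bilinear (K : fieldType) (V : vectType K) (br : V -> V -> V) :
  is_lie_bracket br -> bilinear_for *:%R *:%R br.
Proof. by case=> brL brR _ _; split=> [z a x y | x a y z]; [exact: brL | exact: brR]. Qed.

Lemma bilinear_form_biscalar (K : fieldType) (V : vectType K) (phi : V -> V -> K) :
  bilinear_form phi -> bilinear_for *%R *%R phi.
Proof. by case=> phL phR; split=> [z a x y | x a y z]; [exact: phL | exact: phR]. Qed.

Section LieAlgebra.
Variables (K : fieldType) (V : vectType K) (br : {bilinear V -> V -> V}).

Definition lie_derived : {vspace V} :=
  <<[seq br u v | u <- vbasis {:V}, v <- vbasis {:V}]>>%VS.

Lemma lie_derived_bracket x y : br x y \in lie_derived.
Proof.
rewrite (coord_vbasis (memvf x)) linear_sumlz; apply: rpred_sum => i _.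
rewrite linearZl_LR (coord_vbasis (memvf y)) linear_sumr; apply: rpredZ.
apply: rpred_sum => j _; rewrite linearZr_LR; apply/rpredZ/memv_span.
by apply: allpairs_f; apply: mem_nth; rewrite size_tuple.
Qed.

Lemma lie_simple_derived_full : lie_simple br -> lie_derived = fullv.
Proof.
case=> [[x [y brxy_neq0]] ideals].
have [derived0 | //] := ideals _ (fun x y _ => lie_derived_bracket x y).
by move: brxy_neq0; rewrite -memv0 -derived0 lie_derived_bracket.
Qed.

Hypothesis br_alt : forall x, br x x = 0.
Hypothesis jacobi : forall x y z, br x (br y z) + br y (br z x) + br z (br x y) = 0.

Lemma lie_anticomm x y : br y x = - br x y.
Proof.
apply/eqP; rewrite -addr_eq0 addrC.
by have := br_alt (x + y); rewrite linearDl !linearDr !br_alt add0r addr0 => ->.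
Qed.

Variable phi : {biscalar V}.
Hypothesis phi_skew : forall x y, phi x y = - phi y x.
Hypothesis phi_cyclic : forall x y z, phi (br x y) z = phi (br z x) y.
Hypothesis two_neq0 : 2%:R != 0 :> K.

Lemma invariant_form_brackets_eq0 x y z w : phi (br x y) (br z w) = 0.
Proof.
move: x y z w; apply: (skew_pair_bianchi_eq0 two_neq0).
- by move=> x y z w; rewrite (lie_anticomm x y) linearNl.
- by move=> x y z w; rewrite (lie_anticomm z w) linearNr.
- by move=> x y z w; rewrite phi_skew.
move=> x y z w.
have phi_br a b c d : phi (br a b) (br c d) = - phi (br (br a b) c) d.
  by rewrite phi_skew phi_cyclic.
rewrite !phi_br -!opprD -!linearDl [br (br x y) z]lie_anticomm.
rewrite [br (br y z) x]lie_anticomm [br (br z x) y]lie_anticomm -!opprD.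
by rewrite -addrA addrC jacobi oppr0 linear0l oppr0.
Qed.

Lemma invariant_form_derived_eq0 :
  {in lie_derived & lie_derived, forall x y, phi x y = 0}.
Proof.
apply: biscalar_span_eq0.
move=> _ _ /allpairsP[[x y] [_ _ ->]] /allpairsP[[z w] [_ _ ->]].
exact: invariant_form_brackets_eq0.
Qed.

End LieAlgebra.

Theorem lemma1p4 (K : fieldType) (V : vectType K) (br : V -> V -> V)
  (hchar2 : 2%N \notin [pchar K]) (hchar3 : 3%N \notin [pchar K])
  (hlie : is_lie_bracket br) (hsimple : lie_simple br)
  (phi : V -> V -> K) (hbil : bilinear_form phi) (hskew : skew_symmetric phi)
  (hcyc : forall x y z : V, phi (br x y) z = phi (br z x) y) :
  forall x y : V, phi x y = 0.
Proof.
pose Br := HB.pack_for {bilinear V -> V -> V} br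
  (bilinear_isBilinear.Build K V V V *:%R *:%R br (lie_bracket_bilinear hlie)).
pose Phi := HB.pack_for {biscalar V} phi
  (bilinear_isBilinear.Build K V V K *%R *%R phi (bilinear_form_biscalar hbil)).
have [_ _ br_alt jacobi] := hlie.
have two_neq0 : 2%:R != 0 :> K.
  by apply: contraNneq hchar2 => two_eq0; rewrite inE /= two_eq0 eqxx.
have derived_full : lie_derived Br = fullv.
  exact: (lie_simple_derived_full (br := Br) hsimple).
move=> x y.
by apply: (@invariant_form_derived_eq0 K V Br br_alt jacobi Phi hskew hcyc two_neq0);
  rewrite derived_full memvf.
Qed.
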